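(* Let $I,J\subseteq\mathbb{R}$ be finite nonempty subsets and let $a=(a_i: i\in I)$ and $b=(b_j: j\in J)$ be two sequences of non-negative real numbers. For each $t\in I+J$, let $u_t(a,b)=\max\{a_i+b_{t-i}: i\in I,\ t-i\in J\}$. Then $$\frac{1}{|I|+|J|-1}\sum_{t\in I+J}u_t(a,b)\ \ge\ \frac{1}{|I|}\sum_{i\in I}a_i+\frac{1}{|J|}\sum_{j\in J}b_j.$$ Moreover, if $\min(|I|,|J|)\ge 2$ and $a_i>0$, $b_j>0$ for all $i\in I$, $j\in J$, then equality holds if and only if $I$ and $J$ are arithmetic progressions with a common difference and the sequences $a$ and $b$ (indexed in increasing order of $I$ and $J$) are arithmetic progressions with a common difference.
   Context: $I+J=\{i+j: i\in I, j\in J\}$. *)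

From HB Require Import structures.
From mathcomp Require Import all_boot all_order all_algebra.
From mathcomp Require Import finmap.
Set Implicit Arguments. Unset Strict Implicit. Unset Printing Implicit Defensive.
Import Order.TTheory GRing.Theory Num.Theory.
Local Open Scope fset_scope.
Local Open Scope ring_scope.

Definition sumset (R : realFieldType) (I J : {fset R}) : {fset R} :=
  [fset i + j | i in I, j in J].

(* u_t(a,b) = max { a_i + b_(t-i) : i in I, t - i in J }.
   The max is taken with default 0; since a, b are non-negative and the
   index set is non-empty for t in I+J, this is the genuine maximum. *)
Definition u_t (R : realFieldType) (I J : {fset R}) (a b : R -> R) (t : R) : R :=
  \big[Num.max/0]_(i <- I | (t - i) \in J) (a i + b (t - i)).

Definition ap_set (R : realFieldType) (x0 d : R) (n : nat) : {fset R} :=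
  [fset x0 + k%:R * d | k in iota 0 n].

(* Induct on |I| + |J| by removing the least elements x1 of I and y1 of J.
   Since x1 + y1 is not a sum from (I minus x1) + J, removing x1 lowers the
   envelope sum by at least a x1 + b y1, and likewise for y1.  The right-hand
   sides for (I minus x1, J) and (I, J minus y1), weighted by |I| - 1 and
   |J| - 1, add up exactly to (|I| + |J| - 2) times (the right-hand side for
   (I, J) minus a x1 - b y1), which closes the induction.
   In the equality case both removals are tight.  By positivity x1 + y2 must
   then already be a sum from (I minus x1) + J, which forces the second gaps
   x2 - x1 and y2 - y1 to agree; the two tight bounds have equal right-hand
   sides, which makes b y1 continue the progression of b on J minus y1.  The
   converse is a computation on arithmetic progressions. *)

From HB Require Import structures.
From mathcomp Require Import all_boot all_order all_algebra.
From mathcomp Require Import finmap.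
From mathcomp Require Import ring lra zify.
Import Order.TTheory GRing.Theory Num.Theory.
Local Open Scope fset_scope.
Local Open Scope ring_scope.

Section Envelope.
Local Set Implicit Arguments. Local Unset Strict Implicit.
Variable R : realFieldType.
Implicit Types (I J S T : {fset R}) (a b f : R -> R) (d t x y : R).

Definition least S x := x \in S /\ {in S, forall y, x <= y}.

Lemma least_exists S : S != fset0 -> exists x, least S x.
Proof.
case/fset0Pn=> z zS.
case: (arg_minP (fun i : S => val i) (isT : predT [` zS])) => i _ min_i.
by exists (val i); split=> [|y yS]; [exact: valP | exact: (min_i [` yS])].
Qed.

Lemma sumsetP I J t :
  reflect (exists2 i, i \in I & exists2 j, j \in J & t = i + j) (t \in sumset I J).
Proof.
by apply: (iffP (imfset2P _ _ _ _ _)) => -[i iI [j jJ ->]]; exists i => //; exists j.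
Qed.

Lemma sumsetC I J : sumset I J = sumset J I.
Proof.
by apply/fsetP=> t; apply/sumsetP/sumsetP=> -[i iI [j jJ ->]];
  exists j => //; exists i; rewrite // addrC.
Qed.

Lemma sumsetSl I I' J : I' `<=` I -> sumset I' J `<=` sumset I J.
Proof.
move/fsubsetP=> sI'I; apply/fsubsetP=> t /sumsetP[i iI' [j jJ ->]].
by apply/sumsetP; exists i; [exact: sI'I | exists j].
Qed.

Lemma u_t_ge0 I J a b t : 0 <= u_t I J a b t.
Proof. exact: bigmax_ge_id. Qed.

(* [0 <= c] is needed because the maximum in [u_t] starts from [0]. *)
Lemma u_t_le I J a b t c : 0 <= c ->
  (forall i, i \in I -> t - i \in J -> a i + b (t - i) <= c) -> u_t I J a b t <= c.
Proof.
move=> c_ge0 le_c; rewrite /u_t big_seq_cond.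
by apply: bigmax_le => // i /andP[]; exact: le_c.
Qed.

Lemma le_u_t I J a b t i : i \in I -> t - i \in J -> a i + b (t - i) <= u_t I J a b t.
Proof. exact: le_bigmax_seq. Qed.

Lemma le_u_t_add I J a b i j : i \in I -> j \in J -> a i + b j <= u_t I J a b (i + j).
Proof.
by move=> iI jJ; have := le_u_t (t := i + j) a b iI; rewrite addrAC subrr add0r; apply.
Qed.

Lemma u_tC I J a b t : u_t I J a b t = u_t J I b a t.
Proof.
suff le_u_tC (I' J' : {fset R}) (f g : R -> R) : u_t I' J' f g t <= u_t J' I' g f t.
  by apply/le_anti; rewrite !le_u_tC.
apply: u_t_le => [|i iI tiJ]; first exact: u_t_ge0.
by rewrite addrC; have := le_u_t (t := t) g f tiJ; rewrite subKr; exact.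
Qed.

Lemma u_t_fsubset I I' J a b t : I' `<=` I -> u_t I' J a b t <= u_t I J a b t.
Proof.
move/fsubsetP=> sI'I; apply: u_t_le => [|i iI' tiJ]; first exact: u_t_ge0.
exact/le_u_t/tiJ/sI'I.
Qed.

Definition usum I J a b := \sum_(t <- sumset I J) u_t I J a b t.

Definition avg S f := (\sum_(i <- S) f i) / #|` S|%:R.

Definition mean_bound I J a b := ((#|` I| + #|` J| - 1)%N)%:R * (avg I a + avg J b).

Lemma usumC I J a b : usum I J a b = usum J I b a.
Proof. by rewrite /usum sumsetC; apply: eq_bigr => t _; exact: u_tC. Qed.

Lemma usum_ge0 I J a b : 0 <= usum I J a b.
Proof. by apply: sumr_ge0 => t _; exact: u_t_ge0. Qed.

Lemma mean_boundC I J a b : mean_bound I J a b = mean_bound J I b a.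
Proof. by rewrite /mean_bound addnC addrC. Qed.

Lemma mul_card_avg S f : #|` S|%:R * avg S f = \sum_(i <- S) f i.
Proof.
have [->|S0] := eqVneq S fset0; first by rewrite big_seq_fset0 cardfs0 mul0r.
by rewrite /avg mulrC divfK // pnatr_eq0 -lt0n cardfs_gt0.
Qed.

Lemma avg_fsetD1 S f x : x \in S ->
  #|` S|%:R * avg S f = f x + #|` S `\ x|%:R * avg (S `\ x) f.
Proof. by move=> xS; rewrite !mul_card_avg (big_fsetD1 x). Qed.

Lemma mean_bound1 I J a b x y : I = [fset x] -> J = [fset y] ->
  mean_bound I J a b = a x + b y.
Proof.
by move=> -> ->; rewrite /mean_bound /avg !cardfs1 !big_seq_fset1 !divr1 mul1r.
Qed.

Lemma mean_bound_peel I J a b x1 y1 : x1 \in I -> y1 \in J ->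
  #|` I `\ x1|%:R * mean_bound (I `\ x1) J a b
    + #|` J `\ y1|%:R * mean_bound I (J `\ y1) a b
  = (#|` I `\ x1| + #|` J `\ y1|)%:R * (mean_bound I J a b - a x1 - b y1).
Proof.
move=> x1I y1J; have eA := avg_fsetD1 a x1I; have eB := avg_fsetD1 b y1J.
rewrite /mean_bound (cardfsD1 x1 I) (cardfsD1 y1 J) x1I y1J /= in eA eB *.
set p := #|` I `\ x1| in eA *; set q := #|` J `\ y1| in eB *.
have -> : (p + q.+1 - 1 = p + q)%N by lia.
have -> : (p.+1 + q - 1 = p + q)%N by lia.
have -> : (p.+1 + q.+1 - 1 = (p + q).+1)%N by lia.
rewrite -!natr1 natrD in eA eB *.
move: (avg I a) (avg (I `\ x1) a) (avg J b) (avg (J `\ y1) b) eA eB => A A' B B' eA eB.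
move: (p%:R) (q%:R) => P Q in eA eB *.
have -> : P * ((P + Q) * (A' + B)) + Q * ((P + Q) * (A + B'))
  = (P + Q) * (P * A' + Q * B' + P * B + Q * A) by ring.
have -> : P * A' = (P + 1) * A - a x1 by rewrite eA; ring.
have -> : Q * B' = (Q + 1) * B - b y1 by rewrite eB; ring.
ring.
Qed.

(** * Removing the least elements *)

Section Peel.
Variables (I J : {fset R}) (a b : R -> R) (x1 y1 : R).
Hypotheses (minI : least I x1) (minJ : least J y1).

Lemma least_add_notin : x1 + y1 \notin sumset (I `\ x1) J.
Proof.
case: minI minJ => _ le_x1 [_ le_y1].
apply/sumsetP=> -[x /fsetD1P[xx1 xI] [y yJ eq_sum]].
have : x1 + y1 < x + y by rewrite ltr_leD ?le_y1 // lt_neqAle eq_sym xx1 le_x1.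
by rewrite eq_sum ltxx.
Qed.

Let new_sums := sumset I J `\` sumset (I `\ x1) J.

Lemma usum_new_sums :
  usum (I `\ x1) J a b + \sum_(t <- new_sums) u_t I J a b t <= usum I J a b.
Proof.
have /fsubsetP sub : sumset (I `\ x1) J `<=` sumset I J by apply/sumsetSl/fsubsetDl.
rewrite /usum (big_fsetID _ (mem (sumset (I `\ x1) J)) (sumset I J)) /=.
apply: lerD.
  rewrite [X in _ <= X](eq_fbigl _ (B := sumset (I `\ x1) J)) => [|t].
    by apply: ler_sum => t _; apply/u_t_fsubset/fsubsetDl.
  by rewrite !inE; apply/andP/idP=> [[]//|tS]; rewrite sub.
by rewrite [X in _ <= X](eq_fbigl _ (B := new_sums)) => [|t]; rewrite ?lexx // !inE andbC.
Qed.

Lemma least_add_new : x1 + y1 \in new_sums.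
Proof.
rewrite inE least_add_notin; apply/sumsetP.
by exists x1; [case: minI | exists y1; [case: minJ | ]].
Qed.

Lemma usum_peel : usum (I `\ x1) J a b + (a x1 + b y1) <= usum I J a b.
Proof.
apply: le_trans usum_new_sums; rewrite lerD2l (big_fsetD1 _ least_add_new) /=.
rewrite -[leLHS]addr0 lerD ?sumr_ge0 // => [|t _]; last exact: u_t_ge0.
by apply: le_u_t_add; [case: minI | case: minJ].
Qed.

Lemma usum_peel_extra y : y \in J -> y != y1 -> x1 + y \notin sumset (I `\ x1) J ->
  usum (I `\ x1) J a b + (a x1 + b y1) + (a x1 + b y) <= usum I J a b.
Proof.
move=> yJ yy1 notin; have [[x1I _] [y1J _]] := (minI, minJ).
have new_y : x1 + y \in new_sums `\ (x1 + y1).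
  rewrite !inE notin (inj_eq (addrI x1)) yy1; apply/sumsetP.
  by exists x1 => //; exists y.
apply: le_trans usum_new_sums; rewrite -addrA lerD2l.
rewrite (big_fsetD1 _ least_add_new) (big_fsetD1 _ new_y) /=.
rewrite lerD ?le_u_t_add // -[leLHS]addr0 lerD ?le_u_t_add ?sumr_ge0 // => t _.
exact: u_t_ge0.
Qed.

End Peel.

Lemma usum_peelr I J a b x1 y1 : least I x1 -> least J y1 ->
  usum I (J `\ y1) a b + (a x1 + b y1) <= usum I J a b.
Proof.
by move=> minI minJ; rewrite usumC [usum I J a b]usumC [a x1 + _]addrC; exact: usum_peel.
Qed.

Lemma fsetD1_eq0 S x : x \in S -> S `\ x = fset0 -> S = [fset x].
Proof. by move=> xS S'0; rewrite -(fsetD1K xS) S'0 fsetU0. Qed.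

Theorem mean_bound_le_usum I J a b : I != fset0 -> J != fset0 ->
  mean_bound I J a b <= usum I J a b.
Proof.
have [n] := ubnP (#|` I| + #|` J|); elim: n I J => // n IHn I J ltIJn I0 J0.
have [x1 minI] := least_exists I0; have [y1 minJ] := least_exists J0.
have [[x1I _] [y1J _]] := (minI, minJ).
have cardI : #|` I| = #|` I `\ x1|.+1 by rewrite (cardfsD1 x1) x1I.
have cardJ : #|` J| = #|` J `\ y1|.+1 by rewrite (cardfsD1 y1) y1J.
set c := a x1 + b y1.
have le_weighted k S T : (#|` S| + #|` T| < n)%N -> usum S T a b + c <= usum I J a b ->
    ((0 < k)%N -> S != fset0 /\ T != fset0) ->
    k%:R * mean_bound S T a b <= k%:R * (usum I J a b - c).
  move=> ltSTn le_peel ne; have [->|/ne[S0 T0]] := posnP k; first by rewrite !mul0r.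
  rewrite ler_wpM2l // lerBrDr (le_trans _ le_peel) // lerD2r; exact: IHn.
have := mean_bound_peel a b x1I y1J.
set p := #|` I `\ x1| in cardI *; set q := #|` J `\ y1| in cardJ * => weights.
have [pq0|pq_gt0] := posnP (p + q).
  rewrite (mean_bound1 a b (fsetD1_eq0 x1I _) (fsetD1_eq0 y1J _));
    try by apply: cardfs0_eq; lia.
  by apply: le_trans (usum_peel a b minI minJ); rewrite lerDr usum_ge0.
have ltI'Jn : (p + #|` J| < n)%N by lia.
have ltIJ'n : (#|` I| + q < n)%N by lia.
have ne_I' : (0 < p)%N -> I `\ x1 != fset0 /\ J != fset0 by split; rewrite // -cardfs_gt0.
have ne_J' : (0 < q)%N -> I != fset0 /\ J `\ y1 != fset0 by split; rewrite // -cardfs_gt0.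
have := lerD (le_weighted p _ _ ltI'Jn (usum_peel a b minI minJ) ne_I')
             (le_weighted q _ _ ltIJ'n (usum_peelr a b minI minJ) ne_J').
rewrite weights -mulrDl -natrD ler_pM2l ?ltr0n // /c; lra.
Qed.

(** * The equality case *)

Lemma usum_eq_peel I J a b x1 y1 : least I x1 -> least J y1 ->
    I `\ x1 != fset0 -> J `\ y1 != fset0 -> usum I J a b = mean_bound I J a b ->
  [/\ usum (I `\ x1) J a b = mean_bound (I `\ x1) J a b,
      usum I (J `\ y1) a b = mean_bound I (J `\ y1) a b,
      usum I J a b = usum (I `\ x1) J a b + (a x1 + b y1)
    & usum I J a b = usum I (J `\ y1) a b + (a x1 + b y1)].
Proof.
move=> minI minJ I'0 J'0 eq_usum; have [[x1I _] [y1J _]] := (minI, minJ).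
have peelI := usum_peel a b minI minJ; have peelJ := usum_peelr a b minI minJ.
have I0 : I != fset0 by apply/fset0Pn; exists x1.
have J0 : J != fset0 by apply/fset0Pn; exists y1.
have leI := mean_bound_le_usum a b I'0 J0; have leJ := mean_bound_le_usum a b I0 J'0.
have := mean_bound_peel a b x1I y1J; rewrite natrD -eq_usum.
have : 0 < #|` I `\ x1|%:R :> R by rewrite ltr0n cardfs_gt0.
have : 0 < #|` J `\ y1|%:R :> R by rewrite ltr0n cardfs_gt0.
move: (#|` I `\ x1|%:R) (#|` J `\ y1|%:R) => P Q Q_gt0 P_gt0 weights.
split; nra.
Qed.

Lemma second_gap_le I J x1 x2 y1 y2 :
    least I x1 -> least (I `\ x1) x2 -> least (J `\ y1) y2 ->
  x1 + y2 \in sumset (I `\ x1) J -> x2 - x1 <= y2 - y1.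
Proof.
move=> [_ le_x1] [/fsetD1P[x2x1 x2I] le_x2] [_ le_y2] /sumsetP[x xI' [z zJ e_sum]].
have x1_lt_x2 : x1 < x2 by rewrite lt_neqAle eq_sym x2x1 le_x1.
have x2_le_x := le_x2 _ xI'.
have [zy1|zy1] := eqVneq z y1; first by rewrite zy1 in e_sum; lra.
have : y2 <= z by rewrite le_y2 // !inE zy1.
lra.
Qed.

Lemma usum_tight_gap_le I J a b x1 x2 y1 y2 :
    {in I, forall i, 0 < a i} -> {in J, forall j, 0 < b j} ->
    least I x1 -> least J y1 -> least (I `\ x1) x2 -> least (J `\ y1) y2 ->
  usum I J a b = usum (I `\ x1) J a b + (a x1 + b y1) -> x2 - x1 <= y2 - y1.
Proof.
move=> a_gt0 b_gt0 minI minJ min2I min2J tight.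
apply: (second_gap_le minI min2I min2J); apply/negPn/negP=> notin.
case: (min2J) => /fsetD1P[y2y1 y2J] _.
have := usum_peel_extra a b minI minJ y2J y2y1 notin.
have := a_gt0 _ (proj1 minI); have := b_gt0 _ y2J; lra.
Qed.

Lemma usum_eq_step I J a b x1 x2 y1 y2 :
    {in I, forall i, 0 < a i} -> {in J, forall j, 0 < b j} ->
    least I x1 -> least J y1 -> least (I `\ x1) x2 -> least (J `\ y1) y2 ->
    usum I J a b = mean_bound I J a b ->
  [/\ x2 - x1 = y2 - y1,
      mean_bound (I `\ x1) J a b = mean_bound I (J `\ y1) a b,
      usum (I `\ x1) J a b = mean_bound (I `\ x1) J a b
    & usum I (J `\ y1) a b = mean_bound I (J `\ y1) a b].
Proof.
move=> a_gt0 b_gt0 minI minJ min2I min2J eq_usum.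
have I'0 : I `\ x1 != fset0 by apply/fset0Pn; exists x2; case: min2I.
have J'0 : J `\ y1 != fset0 by apply/fset0Pn; exists y2; case: min2J.
have [eqI' eqJ' tightI tightJ] := usum_eq_peel minI minJ I'0 J'0 eq_usum.
have := usum_tight_gap_le a_gt0 b_gt0 minI minJ min2I min2J tightI.
have := @usum_tight_gap_le J I b a y1 y2 x1 x2 b_gt0 a_gt0 minJ minI min2J min2I.
rewrite usumC [usum (J `\ y1) I b a]usumC [b y1 + _]addrC => /(_ tightJ).
by split; lra.
Qed.

(** * Arithmetic progressions *)

Lemma ap_setP x0 d n t :
  reflect (exists2 k, (k < n)%N & t = x0 + k%:R * d) (t \in ap_set x0 d n).
Proof.
apply: (iffP (imfsetP _ _ _ _)) => [[k /= kn ->]|[k kn ->]]; exists k => //.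
  by move: kn; rewrite mem_iota.
by rewrite /= mem_iota.
Qed.

Lemma ap_set_inj x0 d : d != 0 -> injective (fun k : nat => x0 + k%:R * d).
Proof. by move=> d0 k l /addrI /(mulIf d0) /eqP; rewrite eqr_nat => /eqP. Qed.

Lemma big_ap_set x0 d n f : d != 0 ->
  \sum_(t <- ap_set x0 d n) f t = \sum_(k < n) f (x0 + k%:R * d).
Proof.
move=> d0; rewrite big_imfset /=; last by move=> k l _ _; exact: ap_set_inj.
rewrite undup_id ?iota_uniq // -(big_mkord xpredT (fun k => f (x0 + k%:R * d))).
by rewrite /index_iota subn0.
Qed.

Lemma card_ap_set x0 d n : d != 0 -> #|` ap_set x0 d n| = n.
Proof.
move=> d0; rewrite card_imfset /=; last exact: ap_set_inj.
by rewrite undup_id ?iota_uniq // size_iota.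
Qed.

Lemma ap_set0 x0 d : ap_set x0 d 0 = fset0.
Proof. by apply/fsetP=> t; rewrite inE; apply/ap_setP=> -[]. Qed.

Lemma ap_setS x0 d n : ap_set x0 d n.+1 = x0 |` ap_set (x0 + d) d n.
Proof.
apply/fsetP=> t; apply/ap_setP/fset1UP=> [[[|k] kn ->]|[->|/ap_setP[k kn ->]]].
- by left; rewrite mul0r addr0.
- by right; apply/ap_setP; exists k => //; rewrite -natr1; ring.
- by exists 0%N => //; rewrite mul0r addr0.
- by exists k.+1 => //; rewrite -natr1; ring.
Qed.

Lemma ap_setSD1 x0 d n : 0 < d -> ap_set x0 d n.+1 `\ x0 = ap_set (x0 + d) d n.
Proof.
move=> d_gt0; rewrite ap_setS fsetU1K //; apply/negP=> /ap_setP[k _].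
have : 0 <= k%:R * d by rewrite mulr_ge0 ?ler0n ?ltW.
lra.
Qed.

Lemma least_ap_set x0 d n z : 0 < d -> least (ap_set x0 d n.+1) z -> z = x0.
Proof.
move=> d_gt0 [/ap_setP[k _ ->] le_z]; apply/le_anti.
rewrite le_z ?ap_setS ?fset1U1 //= lerDl mulr_ge0 // ltW //.
Qed.

Lemma sumset_ap_set x0 y0 d m n : (0 < m)%N -> (0 < n)%N ->
  sumset (ap_set x0 d m) (ap_set y0 d n) = ap_set (x0 + y0) d (m + n - 1).
Proof.
move=> m_gt0 n_gt0; apply/fsetP=> t; apply/sumsetP/ap_setP.
  move=> [_ /ap_setP[k km ->] [_ /ap_setP[l ln ->] ->]].
  by exists (k + l)%N; [lia | rewrite natrD; ring].
move=> [s sn ->]; set k := minn s m.-1.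
exists (x0 + k%:R * d); first by apply/ap_setP; exists k => //; lia.
exists (y0 + (s - k)%:R * d); first by apply/ap_setP; exists (s - k)%N => //; lia.
rewrite addrACA -mulrDl -natrD; congr (_ + _%:R * _); lia.
Qed.

Lemma sum_arith n (al de : R) :
  \sum_(k < n) (al + k%:R * de) = n%:R * (al + (n%:R - 1) / 2 * de).
Proof.
by elim: n => [|n IHn]; rewrite ?big_ord0 ?mul0r // big_ord_recr IHn /= -natr1; field.
Qed.

Lemma avg_ap_set x0 d n f (al de : R) : d != 0 -> (0 < n)%N ->
    (forall k, (k < n)%N -> f (x0 + k%:R * d) = al + k%:R * de) ->
  avg (ap_set x0 d n) f = al + (n%:R - 1) / 2 * de.
Proof.
move=> d0 n_gt0 f_ap; rewrite /avg card_ap_set // big_ap_set //.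
rewrite (eq_bigr (fun k : 'I_n => al + k%:R * de)) => [|k _]; last exact: f_ap.
by rewrite sum_arith mulrC mulKf // pnatr_eq0 -lt0n.
Qed.

Definition common_ap I J a b := exists (d x0 y0 alpha beta delta : R),
  [/\ 0 < d, I = ap_set x0 d #|` I|, J = ap_set y0 d #|` J|,
      (forall k, (k < #|` I|)%N -> a (x0 + k%:R * d) = alpha + k%:R * delta)
    & (forall k, (k < #|` J|)%N -> b (y0 + k%:R * d) = beta + k%:R * delta)].

Lemma common_apC I J a b : common_ap J I b a -> common_ap I J a b.
Proof.
by case=> d [x0 [y0 [al [be [de [d_gt0 eJ eI bJ aI]]]]]]; exists d, y0, x0, be, al, de.
Qed.

Lemma fset1_card1 S x : #|` S| = 1%N -> x \in S -> S = [fset x].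
Proof.
move=> S1 xS; apply/fsetD1_eq0/cardfs0_eq => //.
by move: S1; rewrite (cardfsD1 x) xS => -[].
Qed.

Lemma common_ap_card2_1 I J a b x1 x2 : least I x1 -> least (I `\ x1) x2 ->
  #|` I| = 2%N -> #|` J| = 1%N -> common_ap I J a b.
Proof.
move=> [x1I le_x1] [x2I' _] I2 J1; have /fsetD1P[x2x1 x2I] := x2I'.
have /cardfs1P[y J_y] : #|` J| == 1%N by rewrite J1.
have I'_x2 : I `\ x1 = [fset x2].
  by apply: fset1_card1 x2I'; move: I2; rewrite (cardfsD1 x1) x1I => -[].
have d_gt0 : 0 < x2 - x1 by rewrite subr_gt0 lt_neqAle eq_sym x2x1 le_x1.
exists (x2 - x1), x1, y, (a x1), (b y), (a x2 - a x1); split => //.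
- by rewrite I2 !ap_setS ap_set0 fsetU0 addrC subrK -I'_x2 fsetD1K.
- by rewrite J1 ap_setS ap_set0 fsetU0.
- rewrite I2 => -[|[|k]] // _; rewrite ?mulr1n ?mul1r ?mul0r ?addr0 //.
  by rewrite addrC subrK addrC subrK.
- by rewrite J1 => -[|k] // _; rewrite !mul0r !addr0.
Qed.

Lemma ap_set_peel S x0 d x1 x2 : 0 < d -> S = ap_set x0 d #|` S| ->
    least S x1 -> least (S `\ x1) x2 ->
  [/\ x1 = x0, x2 = x0 + d & S `\ x1 = ap_set x2 d #|` S `\ x1|].
Proof.
move=> d_gt0 eS minS min2S; have [x1S _] := minS.
have cardS : #|` S| = #|` S `\ x1|.+1 by rewrite (cardfsD1 x1) x1S.
have ex1 : x1 = x0 by apply: (least_ap_set (n := #|` S `\ x1|) d_gt0); rewrite -cardS -eS.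
have eS' : S `\ x1 = ap_set (x0 + d) d #|` S `\ x1|.
  by rewrite {1}eS cardS ex1 ap_setSD1.
have [p ep] : exists p, #|` S `\ x1| = p.+1.
  exists #|` S `\ x1|.-1; rewrite prednK // cardfs_gt0.
  by apply/fset0Pn; exists x2; case: min2S.
have ex2 : x2 = x0 + d by apply: (least_ap_set (n := p) d_gt0); rewrite -ep -eS'.
by split; rewrite // ex2.
Qed.

Lemma mean_bound_balance I J a b x1 y1 : x1 \in I -> y1 \in J ->
    (0 < #|` I `\ x1| + #|` J `\ y1|)%N ->
    mean_bound (I `\ x1) J a b = mean_bound I (J `\ y1) a b ->
  avg (I `\ x1) a + avg J b = avg I a + avg (J `\ y1) b.
Proof.
move=> x1I y1J pq_gt0.
rewrite /mean_bound (cardfsD1 x1 I) (cardfsD1 y1 J) x1I y1J !add1n addSn addnS !subn1 /=.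
by apply: mulfI; rewrite pnatr_eq0 -lt0n.
Qed.

Lemma common_ap_fsetD1r I J a b x1 x2 y1 y2 :
    least I x1 -> least J y1 -> least (I `\ x1) x2 -> least (J `\ y1) y2 ->
    x2 - x1 = y2 - y1 -> mean_bound (I `\ x1) J a b = mean_bound I (J `\ y1) a b ->
  common_ap I (J `\ y1) a b -> common_ap I J a b.
Proof.
move=> minI minJ min2I min2J gap balance [d [x0 [y0 [al [be [de [d_gt0 eI eJ' aI bJ']]]]]]].
have [[x1I _] [y1J _]] := (minI, minJ); have d0 : d != 0 by rewrite gt_eqF.
have [ex1 ex2 eI'] := ap_set_peel d_gt0 eI minI min2I; subst x0.
have cardI : #|` I| = #|` I `\ x1|.+1 by rewrite (cardfsD1 x1) x1I.
have cardJ : #|` J| = #|` J `\ y1|.+1 by rewrite (cardfsD1 y1) y1J.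
have [q eq] : exists q, #|` J `\ y1| = q.+1.
  exists #|` J `\ y1|.-1; rewrite prednK // cardfs_gt0.
  by apply/fset0Pn; exists y2; case: min2J.
have ey2 : y2 = y0 by apply: (least_ap_set (n := q) d_gt0); rewrite -eq -eJ'.
have ey0 : y0 = y1 + d by lra.
have eJ : J = ap_set y1 d #|` J| by rewrite cardJ ap_setS -ey0 -eJ' fsetD1K.
have avgI : avg I a = al + (#|` I|%:R - 1) / 2 * de.
  by rewrite {1}eI (avg_ap_set _ _ aI) // cardfs_gt0; apply/fset0Pn; exists x1.
have avgI' : avg (I `\ x1) a = (al + de) + (#|` I `\ x1|%:R - 1) / 2 * de.
  rewrite {1}eI' (avg_ap_set (al := al + de) (de := de)) // => [|k k_lt].
    by rewrite cardfs_gt0; apply/fset0Pn; exists x2; case: min2I.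
  have -> : x2 + k%:R * d = x1 + k.+1%:R * d by rewrite ex2 -natr1; ring.
  by rewrite aI ?cardI // -natr1; ring.
have avgJ' : avg (J `\ y1) b = be + (#|` J `\ y1|%:R - 1) / 2 * de.
  by rewrite {1}eJ' (avg_ap_set _ _ bJ') // eq.
have avgJ := avg_fsetD1 b y1J.
have by1 : b y1 = be - de.
  (* The balance of the two tight bounds reads avg (I `\ x1) a - avg I a
     = avg (J `\ y1) b - avg J b, i.e. delta / 2 on both sides. *)
  have pq_gt0 : (0 < #|` I `\ x1| + #|` J `\ y1|)%N by rewrite eq addnS.
  move: (mean_bound_balance x1I y1J pq_gt0 balance) avgJ.
  rewrite avgI avgI' avgJ' cardI cardJ.
  rewrite -[#|` I `\ x1|.+1%:R]natr1 -[#|` J `\ y1|.+1%:R]natr1.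
  move: (#|` I `\ x1|%:R) (#|` J `\ y1|%:R) (avg J b) => P Q B balanceR sumJ.
  have eB : B = be + (Q - 1) / 2 * de - de / 2 by lra.
  have -> : b y1 = (Q + 1) * B - Q * (be + (Q - 1) / 2 * de) by lra.
  by rewrite eB; field.
exists d, x1, y1, al, (be - de), de; split => //.
move=> [|k] k_lt; first by rewrite mul0r !addr0 mul0r addr0 by1.
have -> : y1 + k.+1%:R * d = y0 + k%:R * d by rewrite ey0 -natr1; ring.
rewrite bJ'; first by rewrite -natr1; ring.
by move: k_lt; rewrite cardJ.
Qed.

Theorem usum_eq_common_ap I J a b : (1 < #|` I|)%N -> (1 < #|` J|)%N ->
    {in I, forall i, 0 < a i} -> {in J, forall j, 0 < b j} ->
  usum I J a b = mean_bound I J a b -> common_ap I J a b.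
Proof.
have [n] := ubnP (#|` I| + #|` J|).
elim: n I J a b => // n IHn I J a b ltIJn I_gt1 J_gt1 a_gt0 b_gt0 eq_usum.
have [x1 minI] : exists x1, least I x1 by apply: least_exists; rewrite -cardfs_gt0; lia.
have [y1 minJ] : exists y1, least J y1 by apply: least_exists; rewrite -cardfs_gt0; lia.
have [[x1I _] [y1J _]] := (minI, minJ).
have cardI : #|` I| = #|` I `\ x1|.+1 by rewrite (cardfsD1 x1) x1I.
have cardJ : #|` J| = #|` J `\ y1|.+1 by rewrite (cardfsD1 y1) y1J.
have [x2 min2I] : exists x2, least (I `\ x1) x2.
  by apply: least_exists; rewrite -cardfs_gt0; lia.
have [y2 min2J] : exists y2, least (J `\ y1) y2.
  by apply: least_exists; rewrite -cardfs_gt0; lia.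
have [gap balance eqI' eqJ'] := usum_eq_step a_gt0 b_gt0 minI minJ min2I min2J eq_usum.
have a'_gt0 : {in I `\ x1, forall i, 0 < a i} by move=> i /fsetD1P[_ /a_gt0].
have b'_gt0 : {in J `\ y1, forall j, 0 < b j} by move=> j /fsetD1P[_ /b_gt0].
have [q_gt1|q_le1] := ltnP 1 #|` J `\ y1|.
  apply: (common_ap_fsetD1r minI minJ min2I min2J gap balance).
  by apply: IHn => //; lia.
have [p_gt1|p_le1] := ltnP 1 #|` I `\ x1|.
  apply/common_apC/(common_ap_fsetD1r minJ minI min2J min2I (esym gap)).
    by rewrite mean_boundC [RHS]mean_boundC.
  by apply/common_apC/IHn => //; lia.
apply: (common_ap_fsetD1r minI minJ min2I min2J gap balance).
have I2 : #|` I| = 2%N by lia.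
have J'1 : #|` J `\ y1| = 1%N by lia.
exact: common_ap_card2_1 minI min2I I2 J'1.
Qed.

(** * Progressions attain equality *)

Lemma u_t_const I J a b t c : (exists2 i, i \in I & t - i \in J) -> 0 <= c ->
  (forall i, i \in I -> t - i \in J -> a i + b (t - i) = c) -> u_t I J a b t = c.
Proof.
move=> [i0 i0I ti0J] c_ge0 const; apply/le_anti.
rewrite u_t_le => [|//|i iI tiJ]; last by rewrite const.
by rewrite -(const i0) // le_u_t.
Qed.

Lemma usum_ap_set x0 y0 d m n a b (al be de : R) :
    0 < d -> (0 < m)%N -> (0 < n)%N ->
    {in ap_set x0 d m, forall i, 0 <= a i} -> {in ap_set y0 d n, forall j, 0 <= b j} ->
    (forall k, (k < m)%N -> a (x0 + k%:R * d) = al + k%:R * de) ->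
    (forall k, (k < n)%N -> b (y0 + k%:R * d) = be + k%:R * de) ->
  usum (ap_set x0 d m) (ap_set y0 d n) a b
    = ((m + n - 1)%N)%:R * (al + be + (((m + n - 1)%N)%:R - 1) / 2 * de).
Proof.
move=> d_gt0 m_gt0 n_gt0 a_ge0 b_ge0 a_ap b_ap; have d0 : d != 0 by rewrite gt_eqF.
rewrite /usum sumset_ap_set // big_ap_set // -sum_arith.
apply: eq_bigr => -[s /= s_lt] _; set k := minn s m.-1.
have kI : x0 + k%:R * d \in ap_set x0 d m by apply/ap_setP; exists k => //; lia.
have eJ : x0 + y0 + s%:R * d - (x0 + k%:R * d) = y0 + (s - k)%:R * d.
  by rewrite natrB ?geq_minl //; ring.
have lJ : y0 + (s - k)%:R * d \in ap_set y0 d n.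
  by apply/ap_setP; exists (s - k)%N => //; lia.
have val : a (x0 + k%:R * d) + b (y0 + (s - k)%:R * d) = al + be + s%:R * de.
  rewrite a_ap ?b_ap; try lia.
  by rewrite natrB ?geq_minl; ring.
apply: u_t_const => [||_ /ap_setP[k' k'_lt ->] /ap_setP[l l_lt el]].
- by exists (x0 + k%:R * d); rewrite // eJ.
- by rewrite -val addr_ge0 ?a_ge0 ?b_ge0.
have ekl : s = (k' + l)%N.
  by apply: (ap_set_inj (x0 := x0 + y0) d0); move: el; rewrite /= natrD mulrDl; lra.
by rewrite el a_ap ?b_ap ?ekl ?natrD; first ring.
Qed.

Lemma common_ap_usum_eq I J a b : I != fset0 -> J != fset0 ->
    {in I, forall i, 0 <= a i} -> {in J, forall j, 0 <= b j} ->
  common_ap I J a b -> usum I J a b = mean_bound I J a b.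
Proof.
move=> I0 J0 a_ge0 b_ge0 [d [x0 [y0 [al [be [de [d_gt0 eI eJ aI bJ]]]]]]].
have d0 : d != 0 by rewrite gt_eqF.
have m_gt0 : (0 < #|` I|)%N by rewrite cardfs_gt0.
have n_gt0 : (0 < #|` J|)%N by rewrite cardfs_gt0.
have avgI : avg I a = al + (#|` I|%:R - 1) / 2 * de by rewrite {1}eI (avg_ap_set _ _ aI).
have avgJ : avg J b = be + (#|` J|%:R - 1) / 2 * de by rewrite {1}eJ (avg_ap_set _ _ bJ).
rewrite {1}eI in a_ge0; rewrite {1}eJ in b_ge0.
rewrite /mean_bound avgI avgJ {1}eI {1}eJ (usum_ap_set d_gt0 _ _ a_ge0 b_ge0 aI bJ) //.
move: m_gt0 n_gt0; case: #|` I| => // m _; case: #|` J| => // n _.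
rewrite (_ : (m.+1 + n.+1 - 1 = (m + n).+1)%N); last lia.
rewrite -[(m + n).+1%:R]natr1 -[m.+1%:R]natr1 -[n.+1%:R]natr1 natrD; ring.
Qed.

End Envelope.

Theorem lemma2p4 (R : realFieldType) (I J : {fset R}) (a b : R -> R) :
  I != fset0 -> J != fset0 ->
  (forall i, i \in I -> 0 <= a i) ->
  (forall j, j \in J -> 0 <= b j) ->
  ((\sum_(i <- I) a i) / (#|` I|)%:R + (\sum_(j <- J) b j) / (#|` J|)%:R
     <= (\sum_(t <- sumset I J) u_t I J a b t) / ((#|` I| + #|` J| - 1)%N)%:R)
  /\
  ((2 <= minn #|` I| #|` J|)%N ->
   (forall i, i \in I -> 0 < a i) ->
   (forall j, j \in J -> 0 < b j) ->
   ((\sum_(t <- sumset I J) u_t I J a b t) / ((#|` I| + #|` J| - 1)%N)%:R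
      = (\sum_(i <- I) a i) / (#|` I|)%:R + (\sum_(j <- J) b j) / (#|` J|)%:R
    <->
    exists (d x0 y0 alpha beta delta : R),
      [/\ 0 < d,
          I = ap_set x0 d #|` I|,
          J = ap_set y0 d #|` J|,
          (forall k, (k < #|` I|)%N -> a (x0 + k%:R * d) = alpha + k%:R * delta)
        & (forall k, (k < #|` J|)%N -> b (y0 + k%:R * d) = beta + k%:R * delta)])).
Proof.
move=> I0 J0 a_ge0 b_ge0.
rewrite -/(avg I a) -/(avg J b) -/(usum I J a b).
have N_gt0 : 0 < ((#|` I| + #|` J| - 1)%N)%:R :> R.
  by rewrite ltr0n; move: I0 J0; rewrite -!cardfs_gt0; lia.
split=> [|min2 a_gt0 b_gt0].
  by rewrite ler_pdivlMr // mulrC; exact: mean_bound_le_usum.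
split=> [eq_avg|ap].
  apply: usum_eq_common_ap a_gt0 b_gt0 _; try by move: min2; rewrite leq_min => /andP[].
  by rewrite /mean_bound -eq_avg mulrC divfK // gt_eqF.
by rewrite (common_ap_usum_eq I0 J0 a_ge0 b_ge0 ap) /mean_bound mulrC mulKf // gt_eqF.
Qed.
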